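(* Let $n\ge 1$ and $k\ge 0$ be integers, let $G_n$ be the disjoint union of $n$ copies of the one-way infinite ladder, and let $M_n$ be the algebraic cycle matroid of $G_n$. Then $\mathrm{Spec}(M_n[k])=\{k,k+1,\dots,k+n\}$.
   Context: The one-way infinite ladder is the graph with vertices $u_i,w_i$ ($i\ge 1$) and edges $u_iu_{i+1}$, $w_iw_{i+1}$ and $u_iw_i$ for all $i\ge1$. For a graph $G$, an algebraic cycle is a nonempty edge set $A$ such that every vertex has even degree in the subgraph $(V(G),A)$; the algebraic cycle matroid of $G_n$ has ground set $E(G_n)$ and as independent sets the edge sets containing no algebraic cycle (this is a matroid for $G_n$). Matroids are in the sense of: $\emptyset$ independent; subsets of independent sets independent; if $B$ is maximal independent and $A$ is non-maximal independent then $A\cup\{b\}$ is independent for some $b\in B\setminus A$; for independent $A\subseteq X\subseteq E$ there is a maximal independent $S$ with $A\subseteq S\subseteq X$. Bases are maximal independent sets; the rank is the cardinality of a base (all infinite cardinalities identified). For a matroid $M=(E,\mathcal{L})$ of rank at least $k$, $M[k]=(E,\mathcal{L}[k])$ where $\mathcal{L}[k]=\{S\in\mathcal{L}: \exists T\in\mathcal{L},\ T\supseteq S,\ |T\setminus S|=k\}$; this is a matroid. The finitarization $M^{\mathrm{fin}}$ has as independent sets all sets whose finite subsets are all independent in $M$. $\mathrm{Spec}(M)=\{|F\setminus B|: B\subseteq F,\ F\text{ a base of }M^{\mathrm{fin}},\ B\text{ a base of }M\}$, with all infinite cardinalities identified with a single value $\infty$. *)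

From Stdlib Require Import List.
From mathcomp Require Import all_boot.
Set Implicit Arguments. Unset Strict Implicit. Unset Printing Implicit Defensive.

Definition eset (E : Type) := E -> Prop.
Definition subset {E} (A B : eset E) : Prop := forall x, A x -> B x.
Definition setdiff {E} (A B : eset E) : eset E := fun x => A x /\ ~ B x.

Definition finite_set {E} (A : eset E) : Prop :=
  exists l : list E, forall x, A x -> In x l.

Definition has_card {E} (A : eset E) (j : nat) : Prop :=
  exists l : list E, NoDup l /\ length l = j /\ (forall x, A x <-> In x l).

(* cardinality with all infinite cardinalities identified: None = infinity *)
Definition card_is {E} (A : eset E) (c : option nat) : Prop :=
  match c with
  | Some j => has_card A j
  | None => ~ finite_set A
  end.

(* a matroid is given by its independence predicate *)
Definition is_base {E} (indep : eset E -> Prop) (B : eset E) : Prop :=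
  indep B /\ (forall B', indep B' -> subset B B' -> subset B' B).

(* M[k]: S independent with an independent T ⊇ S, |T \ S| = k *)
Definition truncate {E} (indep : eset E -> Prop) (k : nat) (S : eset E) : Prop :=
  indep S /\ exists T, indep T /\ subset S T /\ has_card (setdiff T S) k.

Definition finitarize {E} (indep : eset E -> Prop) (S : eset E) : Prop :=
  forall F, finite_set F -> subset F S -> indep F.

Definition Spec {E} (indep : eset E -> Prop) (c : option nat) : Prop :=
  exists B F, is_base (finitarize indep) F /\ is_base indep B /\
              subset B F /\ card_is (setdiff F B) c.

Definition even_degree {V E} (inc : E -> V -> Prop) (A : eset E) (v : V) : Prop :=
  exists j, has_card (fun e => A e /\ inc e v) j /\ ~~ odd j.

Definition alg_cycle {V E} (inc : E -> V -> Prop) (A : eset E) : Prop :=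
  (exists e, A e) /\ forall v, even_degree inc A v.

Definition alg_cycle_indep {V E} (inc : E -> V -> Prop) (I : eset E) : Prop :=
  ~ exists A, subset A I /\ alg_cycle inc A.

(* Indices are shifted to start at 0: vertex (c, i, false) is u_{i+1} and
   (c, i, true) is w_{i+1} in copy c. *)
Inductive ekind := Rung | RailU | RailW.
Definition lvertex (n : nat) := ('I_n * nat * bool)%type.
Definition ledge (n : nat) := ('I_n * nat * ekind)%type.

Definition ends (n : nat) (e : ledge n) : lvertex n * lvertex n :=
  match e with
  | (c, i, Rung)  => ((c, i, false), (c, i, true))
  | (c, i, RailU) => ((c, i, false), (c, i.+1, false))
  | (c, i, RailW) => ((c, i, true), (c, i.+1, true))
  end.

Definition ladder_inc (n : nat) (e : ledge n) (v : lvertex n) : Prop :=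
  v = (ends e).1 \/ v = (ends e).2.

Definition Mn (n : nat) : eset (ledge n) -> Prop :=
  alg_cycle_indep (@ladder_inc n).

From HB Require Import structures.
From Pilot Require Import Defs.
From Stdlib Require Import List.
From mathcomp Require Import all_boot zify boolp.
Set Implicit Arguments. Unset Strict Implicit. Unset Printing Implicit Defensive.

(* An even edge set of a ladder is determined by the set P of levels at which it
   has rails: it has both rails at level i iff i \in P, and the rung at i iff P
   changes value at i.  Count the edges of a set X among the first N levels of
   one copy: if X contains no finite cycle there are at most 2N + 1, with 2N + 1
   only if u_N and w_N are already joined there, and the bound is attained when
   no rail can be added to X without closing a cycle.  Bases F of the
   finitarization attain 2N + 1 for infinitely many N in every copy, whereas the
   set T witnessing that B is independent in M[k] is rail-maximal, so it has at
   least 2N; summing over the copies gives k <= |F \ B| <= k + n.  The value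
   k + m arises when m copies of F are double rays closed by their first rung
   and B keeps only the two rails there. *)

Lemma In_mem (T : eqType) (x : T) (s : seq T) : In x s <-> x \in s.
Proof.
elim: s => [|y s IH] //=; rewrite inE.
by split=> [[->|/IH->]|/orP[/eqP->|/IH]]; rewrite ?eqxx ?orbT; auto.
Qed.

Lemma NoDup_uniq (T : eqType) (s : seq T) : NoDup s <-> uniq s.
Proof.
elim: s => [|y s IH] /=; first by split=> // _; constructor.
rewrite NoDup_cons_iff IH In_mem; split=> [[/negP-> ->]//|/andP[/negP]]; by split.
Qed.

Lemma length_size T (s : seq T) : length s = size s.
Proof. by elim: s => //= x s ->. Qed.

Definition count_in T (A : eset T) (s : seq T) : nat := count (fun x => `[< A x >]) s.

Section Cardinality.
Variables (T : eqType) (A : eset T).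

Lemma has_card_unique j j' : has_card A j -> has_card A j' -> j = j'.
Proof.
move=> [s [us [<- As]]] [s' [us' [<- As']]].
by apply/anti_leq/andP; split; apply/leP/NoDup_incl_length => // x; rewrite -As -As'.
Qed.

Lemma count_in_all s : (forall x, x \in s -> A x) -> count_in A s = size s.
Proof. by move=> sA; rewrite /count_in -[RHS]count_predT; apply: eq_in_count => x /sA/asboolT. Qed.

Lemma has_card_count s : uniq s -> (forall x, A x -> x \in s) -> has_card A (count_in A s).
Proof.
move=> us sA; exists (filter (fun x => `[< A x >]) s).
rewrite NoDup_uniq filter_uniq // length_size size_filter; do 2!split=> //.
by move=> x; rewrite In_mem mem_filter; split=> [Ax|/andP[/asboolP]//]; rewrite asboolT // sA.
Qed.

Lemma has_card_seq s : uniq s -> (forall x, A x <-> x \in s) -> has_card A (size s).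
Proof.
move=> us As; rewrite -(count_in_all (s := s)) => [|x /As //].
by apply: has_card_count => // x /As.
Qed.

Lemma count_in_le_card s j : has_card A j -> uniq s -> count_in A s <= j.
Proof.
move=> [l [_ [<- Al]]] us; rewrite /count_in -size_filter length_size.
apply: uniq_leq_size; first exact: filter_uniq.
by move=> x; rewrite mem_filter -In_mem => /andP[/asboolP/Al].
Qed.

Lemma card_le_count_in s j : has_card A j -> (forall x, A x -> x \in s) -> j <= count_in A s.
Proof.
move=> [l [ul [<- Al]]] sA; rewrite /count_in -size_filter length_size.
apply: uniq_leq_size; first by rewrite -NoDup_uniq.
by move=> x; rewrite -In_mem => /Al Ax; rewrite mem_filter asboolT // sA.
Qed.

Lemma finite_of_count_in_bounded m :
  (forall s, uniq s -> count_in A s <= m) -> finite_set A.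
Proof.
move=> bounded; apply: contrapT => infA.
suff [s [us sz sA]] : exists s, [/\ uniq s, size s = m.+1 & forall x, x \in s -> A x].
  by have := bounded s us; rewrite count_in_all // sz ltnn.
elim: m.+1 => [|j [s [us sz sA]]]; first by exists [::].
have [x /not_implyP [Ax xs]] : exists x, ~ (A x -> In x s).
  by apply/existsNP => allin; apply: infA; exists s.
exists (x :: s); split => /=; [by rewrite us andbT; apply/negP => /In_mem | by rewrite sz |].
by move=> y; rewrite inE => /orP[/eqP->|/sA].
Qed.

Lemma card_is_bounds lo hi c :
  (forall s, uniq s -> count_in A s <= hi) ->
  (exists2 s, uniq s & lo <= count_in A s) ->
  card_is A c -> exists j, c = Some j /\ lo <= j <= hi.
Proof.
move=> upper [s us lower]; case: c => [j|] /= cardA; last first.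
  by case: cardA; exact: finite_of_count_in_bounded upper.
exists j; split=> //; apply/andP; split; first exact: leq_trans lower (count_in_le_card cardA us).
case: cardA => l [/NoDup_uniq ul [<- Al]]; rewrite length_size -count_in_all ?upper //.
by move=> x /In_mem/Al.
Qed.

Lemma count_in_subset (A' : eset T) s : Defs.subset A A' -> count_in A s <= count_in A' s.
Proof. by move=> AA'; apply: sub_count => x /asboolP/AA'/asboolT. Qed.

Lemma count_in_sub_seq s t : uniq s -> (forall x, x \in s -> A x -> x \in t) ->
  count_in A s <= count_in A t.
Proof.
move=> us st; rewrite /count_in -!size_filter; apply: uniq_leq_size; first exact: filter_uniq.
by move=> x; rewrite !mem_filter => /andP[/asboolP Ax xs]; rewrite asboolT // st.
Qed.

End Cardinality.

Lemma count_in_setdiff (T : Type) (X Y : eset T) s : Defs.subset Y X ->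
  count_in X s = count_in Y s + count_in (setdiff X Y) s.
Proof.
move=> YX; rewrite /count_in; elim: s => //= x s ->.
have [Yx|nYx] := asboolP (Y x).
  by rewrite (asboolT (YX x Yx)) (asboolF (P := setdiff X Y x)) => [|[]] //; lia.
by rewrite (asbool_equiv_eq (Q := X x)) => [|]; [lia | split=> [[]|]].
Qed.

Lemma has_card_ext (T : Type) (A A' : eset T) j :
  (forall x, A x <-> A' x) -> has_card A j -> has_card A' j.
Proof. by move=> AA' [l [ul [lj Al]]]; exists l; do 2!split=> //; move=> x; rewrite -AA'. Qed.

Definition setU1 (T : Type) (X : eset T) (e : T) : eset T := fun x => x = e \/ X x.

Lemma subset_setU1 (T : Type) (A X : eset T) e :
  Defs.subset A (setU1 X e) -> ~ A e -> Defs.subset A X.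
Proof. by move=> AXe nAe x Ax; case: (AXe x Ax) => // xe; case: nAe; rewrite -xe. Qed.

Lemma truncate_base_maximal (T : Type) (I : eset T -> Prop) k B W e :
  (forall X Y, Defs.subset Y X -> I X -> I Y) ->
  is_base (truncate I k) B -> Defs.subset B W -> I W -> has_card (setdiff W B) k ->
  I (setU1 W e) -> W e.
Proof.
move=> hereditary [_ maxB] BW IW cardWB IWe; apply: contrapT => nWe.
have extB : Defs.subset (setU1 B e) (setU1 W e) by move=> x [->|/BW]; [left | right].
have truncBe : truncate I k (setU1 B e).
  split; first exact: hereditary IWe.
  exists (setU1 W e); do 2!split=> //; apply: has_card_ext cardWB => x.
  split=> [[Wx nBx] | [[xe|Wx] nBex]].
  - by split=> [|[xe|//]]; [right | apply: nWe; rewrite -xe].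
  - by case: nBex; left.
  - by split=> // Bx; apply: nBex; right.
by apply/nWe/BW/(maxB _ truncBe) => [x Bx|]; [right | left].
Qed.

Lemma alg_cycle_indep_subset V E (inc : E -> V -> Prop) (X Y : eset E) :
  Defs.subset Y X -> alg_cycle_indep inc X -> alg_cycle_indep inc Y.
Proof. by move=> YX indepX [A [AY cycA]]; apply: indepX; exists A; split=> // x /AY /YX. Qed.

(* The rungs of the even set whose rails sit at the levels in P. *)
Definition jump (P : nat -> bool) (i : nat) : bool :=
  P i (+) (if i is j.+1 then P j else false).

Lemma eq_jump P Q : P =1 Q -> jump P =1 jump Q.
Proof. by move=> PQ [|i]; rewrite /jump !PQ. Qed.

Lemma jump_inj P Q : jump P =1 jump Q -> P =1 Q.
Proof.
move=> PQ; elim=> [|i IH]; first by move: (PQ 0); rewrite /jump !addbF.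
by move: (PQ i.+1); rewrite /jump IH => /addIb.
Qed.

Lemma jump_run_start (P : nat -> bool) N : P N ->
  exists2 a, a <= N & jump P a /\ forall i, a <= i <= N -> P i.
Proof.
elim: N => [|N IH] PN.
  by exists 0 => //; split=> [|i]; rewrite /jump ?addbF // leqn0 => /eqP->.
have [/IH [a aN [ja Pa]] | nPN] := boolP (P N).
  exists a; first exact: leqW; split=> // i /andP[ai].
  by rewrite leq_eqVlt => /orP[/eqP-> //|iN]; apply: Pa; rewrite ai.
exists N.+1 => //; split; first by rewrite /jump PN (negPf nPN).
by move=> i /anti_leq<-.
Qed.

Lemma jump_free_persist (P : nat -> bool) i : P i -> (forall j, i < j -> ~~ jump P j) ->
  forall j, i <= j -> P j.
Proof.
move=> Pi nojump; elim=> [|j IH]; first by rewrite leqn0 => /eqP<-.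
rewrite leq_eqVlt => /orP[/eqP<- //|ij].
by move: (nojump _ ij); rewrite /jump IH // addbT negbK.
Qed.

Lemma jump_interval a b i : a < b -> jump (fun j => a <= j < b) i = (i == a) || (i == b).
Proof. by move=> ab; rewrite /jump -negb_eqb; case: i => [|i]; lia. Qed.

Lemma jump_ray a i : jump (fun j => a <= j) i = (i == a).
Proof. by rewrite /jump -negb_eqb; case: i => [|i]; lia. Qed.

Scheme Boolean Equality for ekind.

Lemma ekind_eqP : Equality.axiom ekind_beq.
Proof. by case; case; constructor. Qed.
HB.instance Definition _ := hasDecEq.Build ekind ekind_eqP.

Section Incidence.
Variable n : nat.

Definition rail (s : bool) : ekind := if s then RailW else RailU.

Definition edges_at (c : 'I_n) (i : nat) (s : bool) : seq (ledge n) :=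
  [:: (c, i, Rung), (c, i, rail s) & if i is j.+1 then [:: (c, j, rail s)] else [::]].

Lemma uniq_edges_at c i s : uniq (edges_at c i s).
Proof. by case: s; case: i => [|i]; rewrite /= !inE !xpair_eqE !eqxx /=; lia. Qed.

Lemma ladder_inc_edges_at (e : ledge n) c i s :
  ladder_inc e (c, i, s) <-> e \in edges_at c i s.
Proof.
have -> : ladder_inc e (c, i, s) <-> ((c, i, s) == (ends e).1) || ((c, i, s) == (ends e).2).
  by split=> [[]->|/orP[]/eqP->]; rewrite ?eqxx ?orbT; [| |left|right].
suff -> : ((c, i, s) == (ends e).1) || ((c, i, s) == (ends e).2) = (e \in edges_at c i s) by [].
case: e => [[c' j] []]; case: s; case: i => [|i];
  by rewrite /= !inE !xpair_eqE /= ?[c == c']eq_sym; case: (c' == c); rewrite ?eqE /=; lia.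
Qed.

Definition even_set (A : eset (ledge n)) : Prop := forall v, even_degree (@ladder_inc n) A v.

Definition levels (A : eset (ledge n)) (c : 'I_n) (i : nat) : bool := `[< A (c, i, RailU) >].

Definition ladder_cycle (c : 'I_n) (P : nat -> bool) : eset (ledge n) :=
  fun e => let: (c', i, kd) := e in (c' == c) && (if kd is Rung then jump P i else P i).

Lemma even_degree_ladder A c i s :
  even_degree (@ladder_inc n) A (c, i, s) <->
  `[< A (c, i, Rung) >] = jump (fun j => `[< A (c, j, rail s) >]) i.
Proof.
pose D e := A e /\ ladder_inc e (c, i, s).
have cardD : has_card D (count_in A (edges_at c i s)).
  rewrite (_ : count_in A _ = count_in D (edges_at c i s)).
    by apply: has_card_count (uniq_edges_at c i s) _ => e [_ /ladder_inc_edges_at].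
  apply: eq_in_count => e /ladder_inc_edges_at inc_e; apply: asbool_equiv_eq.
  by rewrite /D; tauto.
have -> : even_degree (@ladder_inc n) A (c, i, s) <-> ~~ odd (count_in A (edges_at c i s)).
  split=> [[j [/(has_card_unique cardD) <-]]|even] //.
  by exists (count_in A (edges_at c i s)).
rewrite /count_in /jump; clear cardD D; case: i => [|i] /=.
  by case: `[< A (c, 0, Rung) >]; case: `[< A (c, 0, rail s) >].
by case: `[< A (c, i.+1, Rung) >]; case: `[< A (c, i.+1, rail s) >]; case: `[< A (c, i, rail s) >].
Qed.

Lemma even_setP A : even_set A <->
  forall c i, `[< A (c, i, RailW) >] = levels A c i /\ `[< A (c, i, Rung) >] = jump (levels A c) i.
Proof.
split=> [even c i|rails [[c i] s]]; last first.
  apply/even_degree_ladder; rewrite (proj2 (rails c i)); apply: eq_jump => j.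
  by case: s; rewrite //= (proj1 (rails c j)).
have vertex s j := iffLR (even_degree_ladder A c j s) (even (c, j, s)).
have railsW : (fun j => `[< A (c, j, RailW) >]) =1 levels A c.
  by apply: jump_inj => j; rewrite -(vertex true) -(vertex false).
by split; [exact: railsW | exact: (vertex false)].
Qed.

Lemma ladder_cycle_even c P : even_set (ladder_cycle c P).
Proof.
apply/even_setP => c' i; rewrite /levels /= !asboolb; split=> //.
rewrite [RHS](eq_jump (Q := fun j => (c' == c) && P j)) => [|j]; last exact: asboolb.
by case: eqP => //= _; case: i.
Qed.

Lemma ladder_cycle_alg c (P : nat -> bool) i : P i -> alg_cycle (@ladder_inc n) (ladder_cycle c P).
Proof. by move=> Pi; split; [exists (c, i, RailU); rewrite /= eqxx | exact: ladder_cycle_even]. Qed.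

End Incidence.

Section EvenSets.
Variable n : nat.
Implicit Types (A : eset (ledge n)) (c : 'I_n).

Lemma even_set_railW A c i : even_set A -> A (c, i, RailW) <-> A (c, i, RailU).
Proof. by move=> /even_setP/(_ c i) [railsW _]; apply: asbool_eq_equiv. Qed.

Lemma even_set_rung A c i : even_set A -> A (c, i, Rung) <-> jump (levels A c) i.
Proof. by move=> /even_setP/(_ c i) [_ <-]; exact: rwP (asboolP _). Qed.

Lemma even_set_run A c N : even_set A -> A (c, N, RailU) ->
  exists2 a, a <= N & A (c, a, Rung) /\
    forall i, a <= i <= N -> A (c, i, RailU) /\ A (c, i, RailW).
Proof.
move=> evenA /asboolT/(@jump_run_start (levels A c)) [a aN [ja run]]; exists a => //.
split=> [|i /run /asboolP Ai]; first exact/(even_set_rung _ _ evenA).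
by split=> //; apply/(even_set_railW _ _ evenA).
Qed.

Lemma even_set_rung_rail A c a : even_set A -> A (c, a, Rung) ->
  A (c, a, RailU) \/ exists2 j, a = j.+1 & A (c, j, RailU).
Proof.
move=> evenA /(even_set_rung _ _ evenA); rewrite /jump /levels.
case: asboolP => [|_]; first by left.
by case: a => // j /asboolP; right; exists j.
Qed.

Lemma alg_cycle_rail A : alg_cycle (@ladder_inc n) A -> exists c i, A (c, i, RailU).
Proof.
move=> [[[[c i] [||]] Ae] evenA]; exists c.
- by case: (even_set_rung_rail evenA Ae) => [|[j _]] Aj; [exists i | exists j].
- by exists i.
- by exists i; apply/(even_set_railW _ _ evenA).
Qed.

Lemma finite_set_height A : finite_set A -> exists M, forall e, A e -> e.1.2 < M.
Proof.
move=> [s sA]; exists (\max_(e <- s) e.1.2).+1 => e /sA /In_mem es.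
by rewrite ltnS (leq_bigmax_seq (P := predT) (F := fun x => x.1.2) e es).
Qed.

Lemma finite_even_set_rung_above A c i : even_set A -> finite_set A ->
  A (c, i, RailU) -> exists2 j, i < j & A (c, j, Rung).
Proof.
move=> evenA /finite_set_height [M height] Ai; apply: contrapT => norung.
have /jump_free_persist persist : levels A c i by exact: asboolT.
have /asboolP/height/= : levels A c (maxn i M).
  apply: persist; last exact: leq_maxl.
  by move=> j ij; apply/negP => /(even_set_rung _ _ evenA) Aj; apply: norung; exists j.
by rewrite ltnNge leq_maxr.
Qed.

End EvenSets.

Section Independence.
Variable n : nat.
Implicit Types (X Y : eset (ledge n)).

Definition finite_cycle_free X : Prop :=
  forall A, alg_cycle (@ladder_inc n) A -> finite_set A -> ~ Defs.subset A X.

Lemma MnP X : Mn X <-> forall A, alg_cycle (@ladder_inc n) A -> ~ Defs.subset A X.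
Proof. by split=> [free A cycA AX | free [A [AX /free]]]; [apply: free; exists A | apply]. Qed.

Lemma Mn_finite_cycle_free X : Mn X -> finite_cycle_free X.
Proof. by move=> /MnP free A cycA _; apply: free. Qed.

Lemma Mn_subset X Y : Defs.subset Y X -> Mn X -> Mn Y.
Proof. exact: alg_cycle_indep_subset. Qed.

End Independence.

Section Windows.
Variable n : nat.
Implicit Types (X : eset (ledge n)) (c : 'I_n).

(* u_N and w_N are joined by a path of X inside the first N levels of copy c. *)
Definition linked X c N : Prop := exists2 a, a <= N &
  X (c, a, Rung) /\ forall i, a <= i < N -> X (c, i, RailU) /\ X (c, i, RailW).

Lemma linked_rung X c N : X (c, N, Rung) -> linked X c N.
Proof. by exists N => //; split=> // i /andP[/leq_ltn_trans lt /lt]; rewrite ltnn. Qed.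

Lemma linked0 X c : linked X c 0 <-> X (c, 0, Rung).
Proof.
by split=> [[a] | /linked_rung]; first by rewrite leqn0 => /eqP-> [].
Qed.

Lemma linkedS X c N : linked X c N.+1 <->
  X (c, N.+1, Rung) \/ [/\ linked X c N, X (c, N, RailU) & X (c, N, RailW)].
Proof.
split=> [[a] | [XR | [[a aN [Xa run]] XU XW]]].
- rewrite leq_eqVlt => /orP[/eqP-> [] | aN [Xa run]]; first by left.
  have /run [XU XW] : a <= N < N.+1 by rewrite -ltnS aN ltnSn.
  right; split=> //; exists a => //; split=> // i /andP[ai iN].
  by apply: run; rewrite ai ltnW.
- exact: linked_rung.
exists a; first exact: leqW; split=> // i /andP[ai].
by rewrite ltnS leq_eqVlt => /orP[/eqP-> // | iN]; apply: run; rewrite ai.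
Qed.

Lemma linked_subset X Y c N : Defs.subset X Y -> linked X c N -> linked Y c N.
Proof. by move=> XY [a aN [Xa run]]; exists a => //; split=> [|i /run[]]; auto. Qed.

Lemma linkedSb X c N : `[< linked X c N.+1 >] = `[< X (c, N.+1, Rung) >] ||
  [&& `[< linked X c N >], `[< X (c, N, RailU) >] & `[< X (c, N, RailW) >]].
Proof.
rewrite (asbool_equiv_eq (linkedS X c N)) asbool_or; congr (_ || _).
exact: asbool_equiv_eqP (and3_asboolP _ _ _) (iff_refl _).
Qed.

Fixpoint window c N : seq (ledge n) :=
  if N is M.+1 then [:: (c, N, Rung), (c, M, RailU), (c, M, RailW) & window c M]
  else [:: (c, 0, Rung)].

Lemma mem_window c N e :
  (e \in window c N) = (e.1.1 == c) && (if e.2 is Rung then e.1.2 <= N else e.1.2 < N).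
Proof.
case: e => [[c' i] kd] /=; case: kd; elim: N => [|N IH]; rewrite /= !inE ?IH !xpair_eqE;
  by case: (c' == c); rewrite ?eqE /=; lia.
Qed.

Lemma linked_setU1 X c N e : e \notin window c N -> linked (setU1 X e) c N -> linked X c N.
Proof.
move=> eW [a aN [Xa run]]; have inX x : x \in window c N -> setU1 X e x -> X x.
  by move=> xW [xe|] //; move: eW; rewrite -xe xW.
exists a => //; split=> [|i /[dup] /andP[_ iN] /run[XU XW]].
  by apply: inX Xa; rewrite mem_window /= eqxx.
by split; apply: inX; rewrite // mem_window /= eqxx.
Qed.

Lemma even_set_linked A c N : even_set A -> A (c, N, RailU) -> linked A c N.
Proof.
move=> evenA /(even_set_run evenA) [a aN [Aa run]]; exists a => //; split=> // i /andP[ai iN].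
by apply: run; rewrite ai ltnW.
Qed.

Lemma uniq_window c N : uniq (window c N).
Proof.
elim: N => [|N IH] //=; rewrite IH !inE !mem_window /= !xpair_eqE !eqxx /=.
by rewrite ?eqE /=; lia.
Qed.

Lemma count_window_succ X c N : count_in X (window c N.+1) = `[< X (c, N.+1, Rung) >] +
  `[< X (c, N, RailU) >] + `[< X (c, N, RailW) >] + count_in X (window c N).
Proof. by rewrite /count_in /= !addnA. Qed.

Lemma ladder_cycle_subset X c (P : nat -> bool) :
  (forall i, jump P i -> X (c, i, Rung)) -> (forall i, P i -> X (c, i, RailU) /\ X (c, i, RailW)) ->
  Defs.subset (ladder_cycle c P) X.
Proof. by move=> rungs rails [[c' i] []] /andP[/eqP-> /=] => [/rungs | /rails[] | /rails[]]. Qed.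

Definition rectangle c a b : eset (ledge n) := ladder_cycle c (fun i => a <= i < b).

Definition ray c a : eset (ledge n) := ladder_cycle c (fun i => a <= i).

Lemma rectangle_alg c a b : a < b -> alg_cycle (@ladder_inc n) (rectangle c a b).
Proof. by move=> ab; apply: (ladder_cycle_alg _ (i := a)); rewrite leqnn. Qed.

Lemma rectangle_finite c a b : a < b -> finite_set (rectangle c a b).
Proof.
move=> ab; exists (window c b) => -[[c' i] kd] /andP[/eqP-> /=].
rewrite In_mem mem_window /= eqxx; case: kd => /= [|/andP[_ ib]|/andP[_ ib]] //.
by rewrite jump_interval // => /orP[] /eqP-> //; exact: ltnW.
Qed.

Lemma ray_alg c a : alg_cycle (@ladder_inc n) (ray c a).
Proof. by apply: (ladder_cycle_alg _ (i := a)); rewrite leqnn. Qed.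

Lemma rectangle_subset X c a b : a < b -> X (c, a, Rung) -> X (c, b, Rung) ->
  (forall i, a <= i < b -> X (c, i, RailU) /\ X (c, i, RailW)) -> Defs.subset (rectangle c a b) X.
Proof.
move=> ab Xa Xb rails; apply: ladder_cycle_subset => // i.
by rewrite jump_interval // => /orP[] /eqP->.
Qed.

Lemma linked_rectangle X c N : linked X c N -> X (c, N, RailU) -> X (c, N, RailW) ->
  X (c, N.+1, Rung) -> exists2 a, a < N.+1 & Defs.subset (rectangle c a N.+1) X.
Proof.
move=> [a aN [Xa run]] XU XW XR; exists a => //; apply: rectangle_subset => // i /andP[ai].
by rewrite ltnS leq_eqVlt => /orP[/eqP-> // | iN]; apply: run; rewrite ai.
Qed.

Lemma linked_ray X c N : linked X c N -> (forall i, N <= i -> X (c, i, RailU) /\ X (c, i, RailW)) ->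
  exists a, Defs.subset (ray c a) X.
Proof.
move=> [a aN [Xa run]] above; exists a; apply: ladder_cycle_subset => i.
  by rewrite jump_ray => /eqP->.
by move=> ai; case: (leqP N i) => [/above | iN] //; apply: run; rewrite ai.
Qed.

Lemma count_window_le X c N : finite_cycle_free X ->
  count_in X (window c N) <= N.*2 + `[< linked X c N >].
Proof.
move=> free; elim: N => [|N IH].
  by rewrite /count_in /= (asbool_equiv_eq (linked0 X c)) addn0.
have closed : ~~ [&& `[< linked X c N >], `[< X (c, N, RailU) >], `[< X (c, N, RailW) >]
                  & `[< X (c, N.+1, Rung) >]].
  apply/negP => /and4P[/asboolP L /asboolP XU /asboolP XW /asboolP XR].
  have [a aN rectX] := linked_rectangle L XU XW XR.
  exact: free _ (rectangle_alg c aN) (rectangle_finite c aN) rectX.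
rewrite count_window_succ linkedSb; lia.
Qed.

(* Adding any missing rail to X would close a cycle. *)
Definition saturated X : Prop :=
  forall c N s, ~ X (c, N, rail s) -> X (c, N, rail (~~ s)) /\ linked X c N.

Lemma count_window_ge X c N : saturated X ->
  N.*2 + `[< linked X c N >] <= count_in X (window c N).
Proof.
move=> sat; elim: N => [|N IH].
  by rewrite /count_in /= (asbool_equiv_eq (linked0 X c)) addn0.
have satN s : `[< X (c, N, rail s) >] || `[< X (c, N, rail (~~ s)) >] && `[< linked X c N >].
  by case: asboolP => //= /(sat c N s) [XW L]; rewrite !asboolT.
rewrite count_window_succ linkedSb; move: (satN false) (satN true) => /= satU satW; lia.
Qed.

Definition windows (Nf : 'I_n -> nat) : seq (ledge n) :=
  flatten [seq window c (Nf c) | c <- index_enum 'I_n].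

Lemma mem_windows Nf e :
  (e \in windows Nf) = (if e.2 is Rung then e.1.2 <= Nf e.1.1 else e.1.2 < Nf e.1.1).
Proof.
apply/flatten_mapP/idP => [[c _]|inW]; first by rewrite mem_window => /andP[/eqP->].
by exists e.1.1; rewrite ?mem_index_enum // mem_window eqxx.
Qed.

Lemma uniq_windows Nf : uniq (windows Nf).
Proof.
rewrite /windows; elim: (index_enum 'I_n) (index_enum_uniq 'I_n) => //= c cs IH /andP[ncs ucs].
rewrite cat_uniq uniq_window IH //= andbT; apply/hasP => -[e /flatten_mapP[c' c'cs]].
by rewrite !mem_window => /andP[/eqP e1 _] /andP[/eqP e2 _]; move: ncs; rewrite -e2 e1 c'cs.
Qed.

Lemma count_windows X Nf : count_in X (windows Nf) = \sum_(c < n) count_in X (window c (Nf c)).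
Proof. by rewrite /count_in count_flatten sumnE !big_map. Qed.

End Windows.

Section Bases.
Variable n : nat.
Implicit Types (A X : eset (ledge n)) (c : 'I_n).

Lemma truncate_Mn_finite c0 k X : Mn X -> finite_set X -> truncate (@Mn n) k X.
Proof.
move=> MnX /finite_set_height [M height].
(* k rungs above X: a cycle through one of them needs a rail above X. *)
pose far := [seq (c0, M + t.+1, Rung) | t <- iota 0 k].
have far_high e : e \in far -> M < e.1.2 /\ e.2 = Rung.
  by case/mapP => t _ ->; rewrite /= addnS ltnS leq_addr.
have MnT : Mn (fun e => X e \/ e \in far).
  apply/MnP => A cycA AXf; apply/MnP: MnX => /(_ A cycA); apply => e Ae.
  case: (AXf e Ae) => // /far_high [Me]; case: e Ae Me => [[c q] kd] Ae /= Mq kdR; subst kd.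
  have rail_high j : M <= j -> A (c, j, RailU) -> False.
    by move=> Mj /AXf [/height /=|/far_high [] //]; rewrite ltnNge Mj.
  exfalso; case: (even_set_rung_rail cycA.2 Ae) => [|[j qj]]; apply: rail_high.
    exact: ltnW.
  by rewrite -ltnS -qj.
split=> //; exists (fun e => X e \/ e \in far); do 2!split=> //; first by move=> e Xe; left.
have -> : k = size far by rewrite size_map size_iota.
apply: has_card_seq; first by rewrite map_inj_uniq ?iota_uniq // => t u []; lia.
move=> e; split=> [[[Xe /(_ Xe) //|//]] | efar]; split; [by right | move/height].
by have [Me _] := far_high e efar; rewrite ltnNge (ltnW Me).
Qed.

Lemma finitarize_truncate_MnE c0 k X :
  finitarize (truncate (@Mn n) k) X <-> finite_cycle_free X.
Proof.
split=> [finX A cycA finA AX | free F finF FX].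
  by case: (finX A finA AX) => /MnP /(_ A cycA) notAA _; apply: notAA.
apply: (truncate_Mn_finite c0); last exact: finF.
apply/MnP => A cycA AF; apply: (free A cycA) => [|x /AF /FX //].
by case: finF => s Fs; exists s => x /AF /Fs.
Qed.

Lemma setU1_rail_free (C : eset (ledge n) -> Prop) X c N s :
  (forall A, C A -> even_set A) -> (forall A, C A -> ~ Defs.subset A X) ->
  ~ (X (c, N, rail (~~ s)) /\ linked X c N) ->
  forall A, C A -> ~ Defs.subset A (setU1 X (c, N, rail s)).
Proof.
move=> even free unlinked A CA AXe; have evenA := even A CA.
have [Ae|nAe] := pselect (A (c, N, rail s)); last exact: free A CA (subset_setU1 AXe nAe).
have AU : A (c, N, RailU) by move: Ae; case: (s) => // /(even_set_railW _ _ evenA).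
apply: unlinked; split.
  have /AXe [] // : A (c, N, rail (~~ s)) by case: (s) => //; apply/(even_set_railW _ _ evenA).
  by case: (s).
apply: linked_setU1 (linked_subset AXe (even_set_linked evenA AU)).
by rewrite mem_window /= eqxx; case: (s); rewrite /= ltnn.
Qed.

Lemma finitarize_base_saturated c0 k F :
  is_base (finitarize (truncate (@Mn n) k)) F -> saturated F.
Proof.
move=> [/(finitarize_truncate_MnE c0) freeF maxF] c N s nF; apply: contrapT => unlinked.
apply/nF/(maxF (setU1 F (c, N, rail s))) => [|x Fx|]; [|by right | by left].
apply/(finitarize_truncate_MnE c0) => A cycA finA.
exact: (setU1_rail_free (C := fun B => alg_cycle (@ladder_inc n) B /\ finite_set B)
  (fun B CB => CB.1.2) (fun B CB => freeF B CB.1 CB.2) unlinked (conj cycA finA)).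
Qed.

Lemma truncate_witness_saturated k B T :
  is_base (truncate (@Mn n) k) B -> Defs.subset B T -> Mn T -> has_card (setdiff T B) k ->
  saturated T.
Proof.
move=> baseB BT MnT cardTB c N s nT; apply: contrapT => unlinked; apply: nT.
apply: (truncate_base_maximal (@Mn_subset n) baseB BT MnT cardTB); apply/MnP.
by apply: setU1_rail_free unlinked => [A []|]; last exact/MnP.
Qed.

Lemma finitarize_base_linked c0 k F c M :
  is_base (finitarize (truncate (@Mn n) k)) F -> exists2 N, M <= N & linked F c N.
Proof.
move=> [/(finitarize_truncate_MnE c0) freeF maxF]; apply: contrapT => unlinked.
have no_rung N : M <= N -> ~ F (c, N, Rung).
  by move=> MN /linked_rung LN; apply: unlinked; exists N.
pose r := (c, M.+1, Rung).
have freeFr : finite_cycle_free (setU1 F r).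
  move=> A cycA finA AFr; have evenA := cycA.2.
  have [Ar|nAr] := pselect (A r); last exact: freeF A cycA finA (subset_setU1 AFr nAr).
  case: (even_set_rung_rail evenA Ar) => [AU|[j [<-] AU]].
    have [j Mj /AFr[[jM]|]] := finite_even_set_rung_above evenA finA AU.
      by rewrite jM ltnn in Mj.
    by apply: no_rung; lia.
  apply: unlinked; exists M => //.
  apply: linked_setU1 (linked_subset AFr (even_set_linked evenA AU)).
  by rewrite mem_window /= eqxx ltnn.
apply: (no_rung M.+1 (leqnSn M)); apply: (maxF (setU1 F r) _ _ r (or_introl erefl)).
  exact/(finitarize_truncate_MnE c0).
by move=> x Fx; right.
Qed.

End Bases.

Section SpectrumBounds.
Variables (n k : nat) (c0 : 'I_n) (F B T : eset (ledge n)).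
Hypotheses (baseF : is_base (finitarize (truncate (@Mn n) k)) F)
  (baseB : is_base (truncate (@Mn n) k) B) (BF : Defs.subset B F)
  (BT : Defs.subset B T) (MnT : Mn T) (cardTB : has_card (setdiff T B) k).

Lemma spectrum_upper s : uniq s -> count_in (setdiff F B) s <= k + n.
Proof.
move=> us; have [M height] : exists M, forall e, e \in s -> e.1.2 < M.
  by apply: finite_set_height; exists s => e /In_mem.
pose W := windows (fun _ : 'I_n => M).
have sW : count_in (setdiff F B) s <= count_in (setdiff F B) W.
  apply: count_in_sub_seq => // e /height eM _; rewrite mem_windows.
  by case: e.2 => //; exact: ltnW.
have Fle : count_in F W <= \sum_(c < n) (M.*2 + 1).
  rewrite count_windows; apply: leq_sum => c _.
  apply: leq_trans (count_window_le c M _) _.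
    exact/(finitarize_truncate_MnE c0)/baseF.1.
  by rewrite leq_add2l leq_b1.
have Tge : \sum_(c < n) M.*2 <= count_in T W.
  rewrite count_windows; apply: leq_sum => c _.
  apply: leq_trans (count_window_ge c M (truncate_witness_saturated baseB BT MnT cardTB)).
  exact: leq_addr.
have TBk : count_in (setdiff T B) W <= k := count_in_le_card cardTB (uniq_windows _).
have := count_in_setdiff W BT; have := count_in_setdiff W BF.
rewrite sum_nat_const card_ord mulnDr muln1 in Fle; rewrite sum_nat_const card_ord in Tge.
lia.
Qed.

Lemma spectrum_lower : exists2 s, uniq s & k <= count_in (setdiff F B) s.
Proof.
have [M height] : exists M, forall e, setdiff T B e -> e.1.2 < M.
  by apply: finite_set_height; case: cardTB => l [_ [_ Tl]]; exists l => e /Tl.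
have linked_above c := finitarize_base_linked c0 c M baseF.
pose Nf c := s2val (cid2 (linked_above c)).
have MN c : M <= Nf c := s2valP (cid2 (linked_above c)).
have linkedF c : linked F c (Nf c) := s2valP' (cid2 (linked_above c)).
pose W := windows Nf; exists W; first exact: uniq_windows.
have TBk : k <= count_in (setdiff T B) W.
  apply: (card_le_count_in (s := W) cardTB) => e /height eM; rewrite mem_windows.
  by case: e.2; [apply: leq_trans (ltnW eM) (MN _) | exact: leq_trans eM (MN _)..].
have TF : count_in T W <= count_in F W.
  rewrite !count_windows; apply: leq_sum => c _.
  apply: leq_trans (count_window_le c (Nf c) (Mn_finite_cycle_free MnT)) _.
  apply: leq_trans (count_window_ge c (Nf c) (finitarize_base_saturated c0 baseF)).
  by rewrite leq_add2l (asboolT (linkedF c)) leq_b1.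
have := count_in_setdiff W BT; have := count_in_setdiff W BF; lia.
Qed.

End SpectrumBounds.

Lemma Spec_truncate_Mn_bounds n k (c0 : 'I_n) c :
  Spec (truncate (@Mn n) k) c -> exists j, c = Some j /\ k <= j <= k + n.
Proof.
move=> [B [F [baseF [baseB [BF cardFB]]]]].
have [[_ [T [MnT [BT cardTB]]]] _] := baseB.
exact: card_is_bounds (spectrum_upper c0 baseF baseB BF BT MnT cardTB)
  (spectrum_lower c0 baseF BF BT MnT cardTB) cardFB.
Qed.

Section Witness.
Variables (n k m : nat) (c0 : 'I_n).

(* In the copies c < m, spec_T has both rails and spec_F adds rung 0; in the
   other copies both are the comb of all rungs and the rail u.  spec_B removes
   the first k rails u of copy c0 from spec_T. *)
Definition spec_T : eset (ledge n) := fun '(c, _, kd) =>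
  match kd with Rung => m <= c | RailU => true | RailW => c < m end.

Definition spec_F : eset (ledge n) := fun '(c, i, kd) =>
  match kd with Rung => (c < m) ==> (i == 0) | RailU => true | RailW => c < m end.

Definition removed_rail (e : ledge n) : bool := [&& e.1.1 == c0, e.2 == RailU & e.1.2 < k].

Definition spec_B : eset (ledge n) := fun e => spec_T e /\ ~~ removed_rail e.

Definition removed_rails : seq (ledge n) := [seq (c0, t, RailU) | t <- iota 0 k].

Lemma mem_removed_rails e : (e \in removed_rails) = removed_rail e.
Proof.
apply/mapP/idP => [[t] | /and3P[/eqP c0e /eqP kd ek]].
  by rewrite mem_iota /removed_rail => tk ->; rewrite /= eqxx.
by exists e.1.2; rewrite ?mem_iota // -c0e -kd; case: e {c0e kd ek} => [[]].
Qed.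

Lemma uniq_removed_rails : uniq removed_rails.
Proof. by rewrite map_inj_uniq ?iota_uniq // => t u []. Qed.

Lemma spec_T_Mn : Mn spec_T.
Proof.
apply/MnP => A cycA AT; have [c [i AU]] := alg_cycle_rail cycA; have evenA := cycA.2.
case: (ltnP c m) => cm.
  by have [a _ [/AT]] := even_set_run evenA AU; rewrite /= leqNgt cm.
by have /AT := (even_set_railW _ _ evenA).2 AU; rewrite /= ltnNge cm.
Qed.

Lemma card_spec_T_B : has_card (setdiff spec_T spec_B) k.
Proof.
have -> : k = size removed_rails by rewrite size_map size_iota.
apply: has_card_seq uniq_removed_rails _ => -[[c i] kd]; rewrite mem_removed_rails /setdiff /spec_B.
split=> [[Te] /not_andP[//|/negP/negbNE//] | re]; split=> [|[_ /negP //]].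
by move: re; rewrite /removed_rail /= => /and3P[_ /eqP-> _].
Qed.

Lemma spec_B_truncate : truncate (@Mn n) k spec_B.
Proof.
have BT : Defs.subset spec_B spec_T by move=> e [].
split; first exact: Mn_subset BT spec_T_Mn.
by exists spec_T; split; [exact: spec_T_Mn | split; [exact: BT | exact: card_spec_T_B]].
Qed.

Lemma count_spec_T_window c N : count_in spec_T (window c N) = N.*2 + (m <= c).
Proof.
elim: N => [|N IH]; rewrite ?count_window_succ ?IH /count_in /= /spec_T /= !asboolb;
  by case: (ltnP c m); rewrite /= ?doubleS.
Qed.

Lemma count_window_Mn_superset T' c N : Mn T' -> Defs.subset spec_B T' -> k <= N ->
  count_in T' (window c N) <= count_in spec_T (window c N).
Proof.
move=> MnT' BT' kN; rewrite count_spec_T_window.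
apply: leq_trans (count_window_le c N (Mn_finite_cycle_free MnT')) _.
rewrite leq_add2l; case: (leqP m c) => [_|cm]; first exact: leq_b1.
rewrite leqn0 asboolF // => /linked_ray [i Ni | a rayT'].
  have ki : k <= i := leq_trans kN Ni.
  split; apply: BT'; split; rewrite /removed_rail /= ?cm ?andbF //.
  by apply/negP => /andP[_]; rewrite ltnNge ki.
exact: (MnP _).1 MnT' _ (ray_alg c a) rayT'.
Qed.

Lemma spec_B_base : is_base (truncate (@Mn n) k) spec_B.
Proof.
split=> [|B' [_ [T' [MnT' [B'T' cardT'B']]]] BB' x B'x]; first exact: spec_B_truncate.
apply: contrapT => nBx.
have [l [ul [lk T'l]]] := cardT'B'.
have card_extra : has_card (setU1 (setdiff T' B') x) k.+1.
  rewrite -lk; exists (x :: l); split.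
    by constructor => // /T'l [_]; apply.
  by split=> // e; rewrite /setU1 T'l /=; split=> [[->|]|[<-|]]; auto.
have [M height] : exists M, forall e, setU1 (setdiff T' B') x e -> e.1.2 < M.
  by apply: finite_set_height; case: card_extra => s [_ [_ s_def]]; exists s => e /s_def.
pose N := maxn M k; pose W := windows (fun _ : 'I_n => N).
have extra : k.+1 <= count_in (setdiff T' spec_B) W.
  apply: leq_trans (card_le_count_in (s := W) card_extra _) (count_in_subset _ _).
    move=> e /height eM; rewrite mem_windows; have := leq_maxl M k.
    by case: e.2 => MN; [apply: ltnW | ..]; apply: leq_trans eM MN.
  move=> e [-> | [T'e nB'e]]; first by split=> //; exact: B'T'.
  by split=> // /BB'.
have removed : count_in (setdiff spec_T spec_B) W <= k.
  exact: count_in_le_card card_spec_T_B (uniq_windows _).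
have T'T : count_in T' W <= count_in spec_T W.
  rewrite !count_windows; apply: leq_sum => c _.
  apply: count_window_Mn_superset => //; last exact: leq_maxr.
  by move=> e /BB' /B'T'.
have := count_in_setdiff W (fun e (Be : spec_B e) => B'T' e (BB' e Be)).
have := count_in_setdiff W (fun e (Be : spec_B e) => Be.1); lia.
Qed.

Lemma spec_F_free : finite_cycle_free spec_F.
Proof.
move=> A cycA finA AF; have [c [i AU]] := alg_cycle_rail cycA; have evenA := cycA.2.
case: (ltnP c m) => cm.
  have [j ij /AF] := finite_even_set_rung_above evenA finA AU.
  by rewrite /spec_F /= cm /= => /eqP j0; rewrite j0 in ij.
by have /AF := (even_set_railW _ _ evenA).2 AU; rewrite /spec_F /= ltnNge cm.
Qed.

Lemma spec_F_base : is_base (finitarize (truncate (@Mn n) k)) spec_F.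
Proof.
split=> [|F' /(finitarize_truncate_MnE c0) freeF' FF' [[c i] kd] F'e].
  exact/(finitarize_truncate_MnE c0)/spec_F_free.
apply: contrapT => nFe.
suff [a [b [ab rectF']]] : exists a b, a < b /\ Defs.subset (rectangle c a b) F'.
  exact: freeF' _ (rectangle_alg c ab) (rectangle_finite c ab) rectF'.
have Fin j kd' : spec_F (c, j, kd') -> F' (c, j, kd') by exact: FF'.
case: kd F'e nFe => F'e /= nFe.
- have [cm i0] : c < m /\ 0 < i by case: (c < m) nFe; case: i {F'e}.
  exists 0, i; split=> //; apply: rectangle_subset => //; first by apply: Fin; rewrite /= cm.
  by move=> j _; split; apply: Fin; rewrite /= ?cm.
- by case: nFe.
- have cm : m <= c by rewrite leqNgt; apply/negP.
  exists i, i.+1; split=> //; apply: rectangle_subset => //.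
  1,2: by apply: Fin; rewrite /= ltnNge cm.
  move=> j /andP[ij]; rewrite ltnS => ji; have -> : j = i by apply/eqP; rewrite eqn_leq ij ji.
  by split=> //; apply: Fin.
Qed.

Lemma spec_B_F : Defs.subset spec_B spec_F.
Proof. by move=> [[c i] []] [] //= mc _; rewrite ltnNge mc. Qed.

Hypothesis mn : m <= n.

Definition base_rungs : seq (ledge n) := [seq (widen_ord mn c, 0, Rung) | c <- enum 'I_m].

Lemma mem_base_rungs e : (e \in base_rungs) = [&& e.1.1 < m, e.1.2 == 0 & e.2 == Rung].
Proof.
apply/mapP/and3P => [[c _ ->] | [cm /eqP i0 /eqP kd]]; first by rewrite /= ltn_ord.
exists (Ordinal cm); rewrite ?mem_enum //.
by case: e cm i0 kd => [[c i] kd] /= cm -> ->; congr (_, _, _); exact: val_inj.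
Qed.

Lemma card_spec_F_B : has_card (setdiff spec_F spec_B) (k + m).
Proof.
have -> : k + m = size (base_rungs ++ removed_rails).
  by rewrite size_cat size_map size_enum_ord size_map size_iota addnC.
apply: has_card_seq => [|[[c i] kd]].
  rewrite cat_uniq uniq_removed_rails andbT map_inj_uniq ?enum_uniq => [|a b [] /val_inj//].
  by apply/hasP => -[e /mapP[t _ ->] /mapP[c _]].
rewrite mem_cat mem_base_rungs mem_removed_rails /setdiff /spec_B /=; split.
  move=> [Fe /not_andP[nTe | /negP/negbNE ->]]; last by rewrite orbT.
  case: kd Fe nTe => /= Fe nTe; [|by case: nTe..].
  have cm : c < m by rewrite ltnNge; apply/negP.
  by rewrite cm (implyP Fe cm) eqxx.
case/orP => [/and3P[/= cm /eqP-> /eqP->] | re]; first by split=> [|[]] /=; rewrite ?cm // leqNgt cm.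
split; last by case=> _; rewrite re.
by move: re; rewrite /removed_rail /= => /and3P[_ /eqP-> _].
Qed.

Lemma Spec_witness : Spec (truncate (@Mn n) k) (Some (k + m)).
Proof.
exists spec_B, spec_F; split; first exact: spec_F_base.
by split; [exact: spec_B_base | split; [exact: spec_B_F | exact: card_spec_F_B]].
Qed.

End Witness.

Theorem proposition3p3p2 (n k : nat) (hn : 1 <= n) (c : option nat) :
  Spec (truncate (@Mn n) k) c <-> exists j, c = Some j /\ k <= j <= k + n.
Proof.
have c0 : 'I_n := Ordinal hn.
split=> [|[j [-> /andP[kj jn]]]]; first exact: Spec_truncate_Mn_bounds.
rewrite -(subnKC kj); apply: Spec_witness c0 _.
by rewrite leq_subLR.
Qed.
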